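(* In the setting of the context, consider a Case 2 spacetime ($\partial_v r_->0$). If there exist constants $\varepsilon_\pm>0$ such that $$\lim_{v\to\infty}x_+(v)\exp\left[\frac{h_c}{2}\left\{(1+\varepsilon_+)X_+(v)+(1-\varepsilon_-)X_-(v)\right\}\right]=0,$$ then the spacetime is of Type 1.
   Context: Spherically symmetric spacetime $ds^2=-f(v,r)A(v,r)^2dv^2+2A(v,r)\,dr\,dv+r^2d\Omega^2$ with $A>0$, $f,A\to1$ as $r\to\infty$, $f(v,0)=1$, $\partial_rf(v,0)=\partial_rA(v,0)=0$; $f(v,\cdot)$ has exactly two zeros $r_+(v)>r_-(v)$ (outer/inner apparent horizons, AHs), $f=F(r-r_+)(r-r_-)$ with $F>0$, and $h=AF>0$. Assumptions: $\partial_v r_+<0$; $r_\pm(v)\to r_c$ as $v\to\infty$; the sign of $\partial_v r_-$ is constant; the $v\to\infty$ limits of $A,F,h$ behave as analytic functions of $r$, so all $\partial_r^n h$ converge as $v\to\infty$; $h_c=\lim_{v\to\infty}h(v,r_c)$. With $x=r-r_c$, $x_\pm=r_\pm-r_c$ and $h$ regarded as a function of $(v,x)$, radially outgoing null geodesics solve $dx/dv=\tfrac12h(v,x)(x-x_+(v))(x-x_-(v))$. $X_\pm$ are primitives of $x_\pm$. Case 2 means $\partial_v r_->0$. In Case 2, Type 1 means that there is a unique outgoing null geodesic between the two AHs crossing neither AH (the event horizon) — equivalently, with the compactified outgoing null coordinate $U$ (constant along outgoing null geodesics) and $U^{(\pm)}_\infty=\lim_{v\to\infty}U^{(\pm)}(v)$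 the limiting $U$-values of the AHs, $U^{(+)}_\infty=U^{(-)}_\infty$; Type 2 means a set of positive measure of such geodesics exists ($U^{(+)}_\infty<U^{(-)}_\infty$). *)

From Stdlib Require Import Reals.
From Coquelicot Require Import Coquelicot.
Open Scope R_scope.

(* Radially outgoing null geodesic, written as x = r - r_c as a function of v:
   dx/dv = 1/2 h(v,x) (x - x_+(v)) (x - x_-(v)). *)
Definition outgoing_null_geodesic (h : R -> R -> R) (xp xm : R -> R)
  (g : R -> R) : Prop :=
  forall v : R, is_derive g v (1/2 * h v (g v) * (g v - xp v) * (g v - xm v)).

Definition between_AHs (xp xm g : R -> R) : Prop :=
  forall v : R, xm v < g v < xp v.

(* Type 1: there is a unique outgoing null geodesic between the two AHs that
   crosses neither AH (the event horizon). *)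
Definition type1 (h : R -> R -> R) (xp xm : R -> R) : Prop :=
  exists g : R -> R,
    outgoing_null_geodesic h xp xm g /\ between_AHs xp xm g /\
    forall g' : R -> R,
      outgoing_null_geodesic h xp xm g' -> between_AHs xp xm g' ->
      forall v, g' v = g v.

(* Existence: freeze the geodesic equation outside the band between the horizons. The
   clamped equation has global solutions (Picard iteration) that depend continuously on the
   initial value. As [r_+] decreases and [r_-] increases, each horizon is a one-way barrier,
   so the initial values at [v = 0] whose geodesic eventually drops below [x_-], resp. rises
   above [x_+], form two disjoint open sets containing [x_-(0)], resp. [x_+(0)]. By
   connectedness some initial value does neither, and its geodesic stays between the
   horizons for all [v].

   Uniqueness: geodesics between the horizons are nonincreasing and nonnegative, and two
   distinct ones are strictly ordered from some [v] on. Near [x = 0] the equation is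
   approximately [dx/dv = h_c/2 (x - x_+)(x - x_-)], and the margins [eps_+], [eps_-] make
   [(g_2 - g_1) exp[h_c/2 ((1 + eps_+) X_+ + (1 - eps_-) X_-)]] eventually nondecreasing.
   It is positive but bounded by [x_+ exp[...]], which tends to 0 by hypothesis. *)

From Stdlib Require Import Reals Lra Psatz ClassicalEpsilon Factorial Ranalysis5.
From Coquelicot Require Import Coquelicot.
Open Scope R_scope.

Lemma continuous_eps (f : R -> R) (x eps : R) : continuous f x -> 0 < eps ->
  exists d, 0 < d /\ forall y, Rabs (y - x) < d -> Rabs (f y - f x) < eps.
Proof.
  intros Hc He.
  destruct (Hc _ (locally_ball (f x) (mkposreal eps He))) as [d Hd].
  exists d; split; [apply cond_pos | exact Hd].
Qed.

Lemma continuous2_eps (G : R -> R -> R) (v x eps : R) :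
  continuous (fun p : R * R => G (fst p) (snd p)) (v, x) -> 0 < eps ->
  exists d, 0 < d /\ forall v' x', Rabs (v' - v) < d -> Rabs (x' - x) < d ->
    Rabs (G v' x' - G v x) < eps.
Proof.
  intros Hc He.
  destruct (Hc _ (locally_ball (G v x) (mkposreal eps He))) as [d Hd].
  exists d; split; [apply cond_pos |].
  intros v' x' H1 H2. exact (Hd (v', x') (conj H1 H2)).
Qed.

Lemma is_derive_continuous (f : R -> R) x l : is_derive f x l -> continuous f x.
Proof. intros H. apply (ex_derive_continuous (V := R_NormedModule)). now exists l. Qed.

Lemma derive_nonpos_nonincreasing (f df : R -> R) a b : a <= b ->
  (forall t, a <= t <= b -> is_derive f t (df t)) ->
  (forall t, a <= t <= b -> df t <= 0) -> f b <= f a.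
Proof.
  intros Hab Hd Hs.
  destruct (MVT_gen f a b df) as [c [Hc Heq]];
    rewrite ?Rmin_left, ?Rmax_right in * by lra.
  - intros x Hx. apply Hd. lra.
  - intros x Hx. apply continuity_pt_filterlim, (is_derive_continuous _ _ (df x)), Hd, Hx.
  - assert (df c <= 0) by (apply Hs; lra). nra.
Qed.

Lemma derive_nonneg_nondecreasing (f df : R -> R) a b : a <= b ->
  (forall t, a <= t <= b -> is_derive f t (df t)) ->
  (forall t, a <= t <= b -> 0 <= df t) -> f a <= f b.
Proof.
  intros Hab Hd Hs.
  enough (- f b <= - f a) by lra.
  apply (derive_nonpos_nonincreasing (fun t => - f t) (fun t => - df t) a b Hab).
  - intros t Ht. apply (is_derive_opp f), Hd, Ht.
  - intros t Ht. specialize (Hs t Ht). lra.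
Qed.

Lemma is_derive_mul_exp (f q : R -> R) t df dq :
  is_derive f t df -> is_derive q t dq ->
  is_derive (fun s => f s * exp (q s)) t ((df + dq * f t) * exp (q t)).
Proof.
  intros Hf Hq. auto_derive.
  - split; [now exists df | split; [now exists dq | exact I]].
  - rewrite (is_derive_unique (fun x : R => f x) t df Hf),
      (is_derive_unique (fun x : R => q x) t dq Hq).
    ring.
Qed.

Lemma gronwall_sq (d dd : R -> R) (L a b : R) : 0 <= L -> a <= b ->
  (forall t, a <= t <= b -> is_derive d t (dd t)) ->
  (forall t, a <= t <= b -> Rabs (dd t) <= L * Rabs (d t)) ->
  (d b)^2 <= (d a)^2 * exp (2 * L * (b - a)) /\
  (d a)^2 <= (d b)^2 * exp (2 * L * (b - a)).
Proof.
  intros HL Hab Hd Hb.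
  assert (Hsq : forall t, a <= t <= b -> is_derive (fun s => (d s)^2) t (2 * d t * dd t)).
  { intros t Ht. auto_derive; [exists (dd t); exact (Hd t Ht) |].
    rewrite (is_derive_unique (fun x : R => d x) t (dd t) (Hd t Ht)). ring. }
  assert (Hk : forall t, a <= t <= b -> Rabs (2 * d t * dd t) <= 2 * L * (d t)^2).
  { intros t Ht. rewrite !Rabs_mult, (Rabs_right 2) by lra.
    replace ((d t)^2) with (Rabs (d t) * Rabs (d t))
      by (rewrite <- Rabs_mult, Rabs_right; [ring | nra]).
    specialize (Hb t Ht). assert (0 <= Rabs (d t)) by apply Rabs_pos. nra. }
  split.
  - assert (Hdec : (d b)^2 * exp (2 * L * (b - b)) <= (d a)^2 * exp (2 * L * (b - a))).
    { apply (derive_nonpos_nonincreasing (fun t => (d t)^2 * exp (2 * L * (b - t)))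
        (fun t => (2 * d t * dd t + - (2 * L) * (d t)^2) * exp (2 * L * (b - t))) a b Hab).
      - intros t Ht. apply (is_derive_mul_exp (fun s => (d s)^2) (fun s => 2 * L * (b - s))).
        + now apply Hsq.
        + auto_derive; [exact I | ring].
      - intros t Ht. specialize (Hk t Ht). apply Rabs_le_between in Hk.
        assert (0 < exp (2 * L * (b - t))) by apply exp_pos. nra. }
    rewrite Rminus_diag, Rmult_0_r, exp_0, Rmult_1_r in Hdec. exact Hdec.
  - assert (Hinc : (d a)^2 * exp (2 * L * (a - a)) <= (d b)^2 * exp (2 * L * (b - a))).
    { apply (derive_nonneg_nondecreasing (fun t => (d t)^2 * exp (2 * L * (t - a)))
        (fun t => (2 * d t * dd t + 2 * L * (d t)^2) * exp (2 * L * (t - a))) a b Hab).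
      - intros t Ht. apply (is_derive_mul_exp (fun s => (d s)^2) (fun s => 2 * L * (s - a))).
        + now apply Hsq.
        + auto_derive; [exact I | ring].
      - intros t Ht. specialize (Hk t Ht). apply Rabs_le_between in Hk.
        assert (0 < exp (2 * L * (t - a))) by apply exp_pos. nra. }
    rewrite Rminus_diag, Rmult_0_r, exp_0, Rmult_1_r in Hinc. exact Hinc.
Qed.

Lemma not_upper_bound_lt (E : R -> Prop) (s r : R) : is_lub E s -> r < s ->
  exists t, E t /\ r < t.
Proof.
  intros [_ Hl] Hr. apply NNPP. intros Hn.
  enough (s <= r) by lra.
  apply Hl. intros t Et. apply Rnot_lt_le. intros Hrt. apply Hn. now exists t.
Qed.

Lemma interval_local_to_global (c d : R) (A : R -> R -> R -> Prop) : c <= d ->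
  (forall e e' B B' y, 0 < e' -> e' <= e -> B <= B' -> A e B y -> A e' B' y) ->
  (forall x, c <= x <= d -> exists r, 0 < r /\ exists e, 0 < e /\ exists B,
       forall y, Rabs (y - x) < r -> A e B y) ->
  exists e, 0 < e /\ exists B, forall y, c <= y <= d -> A e B y.
Proof.
  intros Hcd Hmono Hloc.
  set (E := fun t => c <= t <= d /\ exists e, 0 < e /\ exists B,
                       forall y, c <= y <= t -> A e B y).
  assert (Ec : E c).
  { split; [lra |]. destruct (Hloc c) as [r [Hr [e [He [B HB]]]]]; [lra |].
    exists e; split; [exact He |]. exists B. intros y Hy. apply HB.
    replace (y - c) with 0 by lra. rewrite Rabs_R0. exact Hr. }
  destruct (completeness E) as [s Hs]; [exists d; intros t [Ht _]; lra | now exists c |].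
  assert (Hcs : c <= s) by (apply (proj1 Hs); exact Ec).
  assert (Hsd : s <= d) by (apply (proj2 Hs); intros t [Ht _]; lra).
  destruct (Hloc s (conj Hcs Hsd)) as [r [Hr [e0 [He0 [B0 HB0]]]]].
  destruct (not_upper_bound_lt E s (s - r/2) Hs) as [t [[Ht [e1 [He1 [B1 HB1]]]] Hts]]; [lra |].
  assert (Hts' : t <= s) by (apply (proj1 Hs); split; [lra | exists e1; eauto]).
  set (t1 := Rmin (s + r/2) d).
  assert (Et1 : E t1).
  { split; [unfold t1; split; [apply Rmin_glb; lra | apply Rmin_r] |].
    exists (Rmin e0 e1); split; [now apply Rmin_glb_lt |].
    exists (Rmax B0 B1). intros y Hy.
    destruct (Rle_dec y t).
    - apply (Hmono e1 _ B1); [now apply Rmin_glb_lt | apply Rmin_r | apply Rmax_r |].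
      apply HB1. lra.
    - apply (Hmono e0 _ B0); [now apply Rmin_glb_lt | apply Rmin_l | apply Rmax_l |].
      apply HB0. assert (t1 <= s + r/2) by apply Rmin_l. apply Rabs_def1; lra. }
  assert (Ht1s : t1 <= s) by (apply (proj1 Hs); exact Et1).
  assert (Ht1 : t1 = d).
  { unfold t1 in *. destruct (Rle_dec (s + r/2) d).
    - rewrite Rmin_left in Ht1s by lra. lra.
    - now rewrite Rmin_right by lra. }
  destruct Et1 as [_ [e [He [B HB]]]]. exists e; split; [exact He |]. exists B.
  intros y Hy. apply HB. lra.
Qed.

Lemma continuous2_bounded_box (G : R -> R -> R) a b c d : a <= b -> c <= d ->
  (forall v x, a <= v <= b -> c <= x <= d ->
     continuous (fun p : R * R => G (fst p) (snd p)) (v, x)) ->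
  exists B, forall v x, a <= v <= b -> c <= x <= d -> Rabs (G v x) <= B.
Proof.
  intros Hab Hcd Hc.
  assert (Htube : forall t, a <= t <= b -> exists r, 0 < r /\ exists B,
             forall v x, Rabs (v - t) < r -> c <= x <= d -> Rabs (G v x) <= B).
  { intros t Ht.
    destruct (interval_local_to_global c d
                (fun e B x => forall v, Rabs (v - t) < e -> Rabs (G v x) <= B) Hcd)
      as [e [He [B HB]]].
    - intros e e' B B' y _ Hee HBB H v Hv. specialize (H v ltac:(lra)). lra.
    - intros x Hx. destruct (continuous2_eps G t x 1 (Hc t x Ht Hx) Rlt_0_1) as [r [Hr Hd]].
      exists r; split; [exact Hr |]. exists r; split; [exact Hr |]. exists (Rabs (G t x) + 1).
      intros y Hy v Hv. specialize (Hd v y Hv Hy).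
      assert (Rabs (G v y) - Rabs (G t x) <= Rabs (G v y - G t x)) by apply Rabs_triang_inv.
      lra.
    - exists e; split; [exact He |]. exists B. intros v x Hv Hx. now apply HB. }
  destruct (interval_local_to_global a b
              (fun _ B v => forall x, c <= x <= d -> Rabs (G v x) <= B) Hab)
    as [_ [_ [B HB]]].
  - intros e e' B B' y _ _ HBB H x Hx. specialize (H x Hx). lra.
  - intros t Ht. destruct (Htube t Ht) as [r [Hr [B HB]]].
    exists r; split; [exact Hr |]. exists 1; split; [lra |]. exists B.
    intros v Hv x Hx. now apply HB.
  - exists B. intros v x Hv Hx. now apply HB.
Qed.

Lemma continuous_bounded_interval (f : R -> R) c d : c <= d ->
  (forall x, c <= x <= d -> continuous f x) ->
  exists B, forall x, c <= x <= d -> Rabs (f x) <= B.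
Proof.
  intros Hcd Hc.
  destruct (continuity_ab_maj (fun x => Rabs (f x)) c d Hcd) as [m [Hm _]].
  - intros x Hx. apply (continuity_pt_comp f Rabs).
    + now apply continuity_pt_filterlim, Hc.
    + apply Rcontinuity_abs.
  - now exists (Rabs (f m)).
Qed.

Lemma derive_pos_locally_increasing (f : R -> R) (s l : R) : is_derive f s l -> 0 < l ->
  exists d, 0 < d /\ (forall u, s < u < s + d -> f s < f u) /\
                     (forall u, s - d < u < s -> f u < f s).
Proof.
  intros Hd Hl. apply is_derive_Reals in Hd.
  destruct (Hd (l/2) ltac:(lra)) as [d Hdd].
  assert (Hslope : forall u, u <> s -> Rabs (u - s) < d -> l / 2 < (f u - f s) / (u - s)).
  { intros u Hus Hu. specialize (Hdd (u - s) ltac:(lra) Hu).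
    replace (s + (u - s)) with u in Hdd by ring.
    apply Rabs_def2 in Hdd. lra. }
  exists d; split; [apply cond_pos | split]; intros u Hu;
    specialize (Hslope u ltac:(lra) ltac:(apply Rabs_def1; lra));
    assert (f u - f s = (f u - f s) / (u - s) * (u - s)) by (field; lra); nra.
Qed.

Section Barrier.

Variables phi dphi : R -> R.
Hypothesis Hphi : forall t, is_derive phi t (dphi t).
Hypothesis Hpush : forall t, 0 <= phi t -> 0 < dphi t.

Lemma barrier_nonneg a b : a <= b -> 0 <= phi a -> 0 <= phi b.
Proof.
  intros Hab Ha.
  set (E := fun t => a <= t <= b /\ 0 <= phi t).
  destruct (completeness E) as [c Hc]; [exists b; intros t [Ht _]; lra | now exists a |].
  assert (Hac : a <= c) by (apply (proj1 Hc); split; [lra | exact Ha]).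
  assert (Hcb : c <= b) by (apply (proj2 Hc); intros t [Ht _]; lra).
  assert (Hc0 : 0 <= phi c).
  { apply Rnot_lt_le. intros Hneg.
    destruct (continuous_eps phi c (- phi c) (is_derive_continuous _ _ _ (Hphi c)))
      as [d [Hd Hnear]]; [lra |].
    destruct (not_upper_bound_lt E c (c - d) Hc) as [t [[Ht Ht0] Htc]]; [lra |].
    assert (t <= c) by (apply (proj1 Hc); now split).
    specialize (Hnear t ltac:(apply Rabs_def1; lra)). apply Rabs_def2 in Hnear. lra. }
  destruct (Req_dec c b) as [<- | Hne]; [exact Hc0 |].
  destruct (derive_pos_locally_increasing phi c (dphi c) (Hphi c) (Hpush c Hc0))
    as [d [Hd [Hright _]]].
  set (u := Rmin (c + d/2) b).
  assert (Hu : c < u <= c + d/2 /\ u <= b)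
    by (unfold u; repeat split; [apply Rmin_glb_lt | apply Rmin_l | apply Rmin_r]; lra).
  assert (u <= c) by (apply (proj1 Hc); split; [lra | specialize (Hright u); lra]).
  lra.
Qed.

Lemma barrier_pos a b : a < b -> 0 <= phi a -> 0 < phi b.
Proof.
  intros Hab Ha.
  assert (Hb : 0 <= phi b) by (apply (barrier_nonneg a); lra).
  destruct (Req_dec (phi b) 0) as [Hb0 | Hne]; [| lra].
  destruct (derive_pos_locally_increasing phi b (dphi b) (Hphi b) (Hpush b Hb))
    as [d [Hd [_ Hleft]]].
  set (u := Rmax ((a + b) / 2) (b - d/2)).
  assert (Hu : a < u < b /\ b - d/2 <= u)
    by (unfold u; repeat split; [eapply Rlt_le_trans; [|apply Rmax_l] | apply Rmax_lub_lt
                                 | apply Rmax_r]; lra).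
  assert (0 <= phi u) by (apply (barrier_nonneg a); lra).
  specialize (Hleft u ltac:(lra)). lra.
Qed.

End Barrier.

Lemma primitive_power_bound_nonneg (f df : R -> R) C n v : 0 <= v -> f 0 = 0 ->
  (forall s, 0 <= s <= v -> is_derive f s (df s)) ->
  (forall s, 0 <= s <= v -> Rabs (df s) <= C * s ^ n) ->
  Rabs (f v) <= C * v ^ (S n) / INR (S n).
Proof.
  intros Hv Hf0 Hd Hb.
  assert (HS : 0 < INR (S n)) by (apply lt_0_INR; lia).
  assert (Hpow : forall s, is_derive (fun s => C * (s ^ (S n) / INR (S n))) s (C * s ^ n)).
  { intros s. auto_derive; [exact I |].
    change (match n with 0%nat => 1 | S _ => INR n + 1 end) with (INR (S n)).
    field. lra. }
  assert (Hup : f v - C * (v ^ (S n) / INR (S n)) <= f 0 - C * (0 ^ (S n) / INR (S n))).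
  { apply (derive_nonpos_nonincreasing (fun s => f s - C * (s ^ (S n) / INR (S n)))
             (fun s => df s - C * s ^ n) 0 v Hv).
    - intros t Ht. apply (is_derive_minus f); [now apply Hd | apply Hpow].
    - intros t Ht. specialize (Hb t Ht). apply Rabs_le_between in Hb. lra. }
  assert (Hlo : f 0 + C * (0 ^ (S n) / INR (S n)) <= f v + C * (v ^ (S n) / INR (S n))).
  { apply (derive_nonneg_nondecreasing (fun s => f s + C * (s ^ (S n) / INR (S n)))
             (fun s => df s + C * s ^ n) 0 v Hv).
    - intros t Ht. apply (is_derive_plus f); [now apply Hd | apply Hpow].
    - intros t Ht. specialize (Hb t Ht). apply Rabs_le_between in Hb. lra. }
  rewrite pow_ne_zero, Hf0 in Hup, Hlo by lia.
  apply Rabs_le. unfold Rdiv in *. lra.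
Qed.

Lemma primitive_power_bound (f df : R -> R) C n v : f 0 = 0 ->
  (forall s, is_derive f s (df s)) ->
  (forall s, Rabs s <= Rabs v -> Rabs (df s) <= C * Rabs s ^ n) ->
  Rabs (f v) <= C * Rabs v ^ (S n) / INR (S n).
Proof.
  intros Hf0 Hd Hb.
  destruct (Rle_dec 0 v) as [Hv | Hv].
  - rewrite (Rabs_right v) by lra.
    apply (primitive_power_bound_nonneg f df); auto.
    intros s Hs. replace (s ^ n) with (Rabs s ^ n) by (rewrite Rabs_right; lra).
    apply Hb. rewrite !Rabs_right; lra.
  - rewrite (Rabs_left v), <- (Ropp_involutive v) at 1 by lra.
    apply (primitive_power_bound_nonneg (fun s => f (- s)) (fun s => - df (- s)));
      [lra | now rewrite Ropp_0 | |].
    + intros s _. auto_derive; [now exists (df (- s)) |].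
      rewrite (is_derive_unique (fun x : R => f x) (- s) (df (- s)) (Hd (- s))). ring.
    + intros s Hs. rewrite Rabs_Ropp.
      replace (s ^ n) with (Rabs (- s) ^ n) by (rewrite Rabs_Ropp, Rabs_right; lra).
      apply Hb.
      rewrite Rabs_Ropp, (Rabs_left v), Rabs_right; lra.
Qed.

Lemma lipschitz_of_derive_bound (f : R -> R) c d B :
  (forall x, c <= x <= d -> ex_derive f x) ->
  (forall x, c <= x <= d -> Rabs (Derive f x) <= B) ->
  forall x y, c <= x <= d -> c <= y <= d -> Rabs (f x - f y) <= B * Rabs (x - y).
Proof.
  intros Hd HB x y Hx Hy.
  assert (Hseg : forall z, Rmin y x <= z <= Rmax y x -> c <= z <= d)
    by (intros z; unfold Rmin, Rmax; destruct (Rle_dec y x); lra).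
  destruct (MVT_abs f (Derive f) y x) as [z [Heq Hz]].
  - intros z Hz. apply is_derive_Reals, Derive_correct, Hd, Hseg, Hz.
  - rewrite Heq. apply Rmult_le_compat_r; [apply Rabs_pos | apply HB, Hseg, Hz].
Qed.

Lemma is_lim_pinfty_eps (f : R -> R) (l : R) : is_lim f p_infty l ->
  forall eps, 0 < eps -> exists M, forall x, M < x -> Rabs (f x - l) < eps.
Proof.
  intros H eps He. apply is_lim_spec in H. exact (H (mkposreal eps He)).
Qed.

Lemma nonincreasing_ge_lim (f g : R -> R) (l : R) :
  (forall a b, a <= b -> f b <= f a) -> (forall v, g v <= f v) -> is_lim g p_infty l ->
  forall v, l <= f v.
Proof.
  intros Hdec Hgf Hlim v. apply Rnot_lt_le. intros Hlt.
  destruct (is_lim_pinfty_eps g l Hlim (l - f v)) as [M HM]; [lra |].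
  set (w := Rmax M v + 1).
  specialize (HM w ltac:(unfold w; generalize (Rmax_l M v); lra)).
  specialize (Hdec v w ltac:(unfold w; generalize (Rmax_r M v); lra)).
  specialize (Hgf w). apply Rabs_def2 in HM. lra.
Qed.

Lemma interval_not_split (A B : R -> Prop) c d : c <= d -> A c -> B d ->
  (forall y, A y -> B y -> False) ->
  (forall y, A y -> exists r, 0 < r /\ forall y', Rabs (y' - y) < r -> A y') ->
  (forall y, B y -> exists r, 0 < r /\ forall y', Rabs (y' - y) < r -> B y') ->
  exists y, c <= y <= d /\ ~ A y /\ ~ B y.
Proof.
  intros Hcd Ac Bd Hdisj HA HB.
  set (S := fun y => c <= y <= d /\ A y).
  destruct (completeness S) as [s Hs];
    [exists d; intros y [Hy _]; lra | exists c; split; [lra | exact Ac] |].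
  assert (Hcs : c <= s) by (apply (proj1 Hs); split; [lra | exact Ac]).
  assert (Hsd : s <= d) by (apply (proj2 Hs); intros y [Hy _]; lra).
  exists s. split; [lra | split].
  - intros As. destruct (HA s As) as [r [Hr Hnear]].
    destruct (Req_dec s d) as [-> | Hne]; [exact (Hdisj d As Bd) |].
    set (y := Rmin (s + r/2) d).
    assert (Hy : s < y <= s + r/2 /\ y <= d)
      by (unfold y; repeat split; [apply Rmin_glb_lt | apply Rmin_l | apply Rmin_r]; lra).
    assert (y <= s) by (apply (proj1 Hs); split; [lra | apply Hnear, Rabs_def1; lra]).
    lra.
  - intros Bs. destruct (HB s Bs) as [r [Hr Hnear]].
    destruct (Req_dec s c) as [-> | Hne]; [exact (Hdisj c Ac Bs) |].
    destruct (not_upper_bound_lt S s (s - r/2) Hs) as [y [[Hy Ay] Hys]]; [lra |].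
    assert (y <= s) by (apply (proj1 Hs); now split).
    apply (Hdisj y Ay), Hnear, Rabs_def1; lra.
Qed.

(** * Global solutions by Picard iteration *)

Lemma is_derive_RInt_from_0 (f : R -> R) (y0 v : R) : (forall s, continuous f s) ->
  is_derive (fun v => y0 + RInt f 0 v) v (f v).
Proof.
  intros Hc. rewrite <- (Rplus_0_l (f v)).
  apply (is_derive_plus (fun _ => y0) (fun v => RInt f 0 v)).
  - exact (is_derive_const (K := R_AbsRing) (V := R_NormedModule) y0 v).
  - apply (is_derive_RInt f (fun v => RInt f 0 v) 0 v); [| apply Hc].
    apply filter_forall. intros b. apply (RInt_correct f 0 b).
    apply ex_RInt_continuous. intros z _. apply Hc.
Qed.

Lemma ex_series_exp_majorant (M L N : R) : 0 <= M -> 0 <= L -> 0 <= N ->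
  ex_series (fun k => M * L ^ k * N ^ (S k) / INR (fact (S k))).
Proof.
  intros HM HL HN.
  assert (Hfact : forall k, 0 < INR (fact k)) by (intros; apply lt_0_INR, lt_O_fact).
  apply (ex_series_le (K := R_AbsRing) (V := R_CompleteNormedModule) _
           (fun k => M * N * ((L * N) ^ k / INR (fact k)))).
  - intros k. rewrite Rpow_mult_distr, <- tech_pow_Rmult.
    rewrite Rabs_right; cycle 1.
    { apply Rle_ge, Rmult_le_pos; [repeat apply Rmult_le_pos; try apply pow_le; lra |].
      left. apply Rinv_0_lt_compat, Hfact. }
    unfold Rdiv. replace (M * L ^ k * (N * N ^ k)) with (M * N * (L ^ k * N ^ k)) by ring.
    rewrite <- !Rmult_assoc. apply Rmult_le_compat_l.
    + repeat apply Rmult_le_pos; try apply pow_le; lra.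
    + apply Rinv_le_contravar; [apply Hfact |]. apply le_INR. rewrite fact_simpl. lia.
  - apply (ex_series_ext (fun k => scal (M * N) (scal (pow_n (L * N) k) (/ INR (fact k))))).
    + intros k. rewrite pow_n_pow. reflexivity.
    + exact (ex_series_scal_l (M * N) _ (ex_intro _ _ (is_exp_Reals (L * N)))).
Qed.

Lemma Boule_0_iff (r : posreal) y : Boule 0 r y <-> Rabs y < r.
Proof. unfold Boule. now rewrite Rminus_0_r. Qed.

Section Picard.

Variable G : R -> R -> R.
Variable y0 : R.
Hypothesis HGcont : forall phi : R -> R, (forall s, continuous phi s) ->
  forall s, continuous (fun s => G s (phi s)) s.
Hypothesis HGstrip : forall N, 0 <= N -> exists M L, 0 <= M /\ 0 <= L /\
  forall v, Rabs v <= N -> forall x y,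
    Rabs (G v x) <= M /\ Rabs (G v x - G v y) <= L * Rabs (x - y).

Fixpoint picard_iter (k : nat) : R -> R :=
  match k with
  | O => fun _ => y0
  | S k => fun v => y0 + RInt (fun s => G s (picard_iter k s)) 0 v
  end.

Lemma picard_iter_spec k : (forall s, continuous (picard_iter k) s) /\
  forall v, is_derive (picard_iter (S k)) v (G v (picard_iter k v)).
Proof.
  induction k as [| k [_ IHder]].
  - split; [intros s; apply continuous_const |].
    intros v. apply (is_derive_RInt_from_0 (fun s => G s y0)), HGcont.
    intros s. apply continuous_const.
  - assert (Hc : forall s, continuous (picard_iter (S k)) s)
      by (intros s; exact (is_derive_continuous _ _ _ (IHder s))).
    split; [exact Hc |].
    intros v. apply (is_derive_RInt_from_0 (fun s => G s (picard_iter (S k) s))), HGcont, Hc.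
Qed.

Lemma picard_iter_0 k : picard_iter k 0 = y0.
Proof.
  destruct k; [reflexivity |]. simpl. rewrite RInt_point. apply Rplus_0_r.
Qed.

Lemma picard_iter_step_bound N M L : 0 <= L ->
  (forall v, Rabs v <= N -> forall x y,
     Rabs (G v x) <= M /\ Rabs (G v x - G v y) <= L * Rabs (x - y)) ->
  forall k v, Rabs v <= N ->
  Rabs (picard_iter (S k) v - picard_iter k v) <= M * L ^ k * Rabs v ^ (S k) / INR (fact (S k)).
Proof.
  intros HL HML k.
  assert (Hfact : forall k, 0 < INR (fact k)) by (intros; apply lt_0_INR, lt_O_fact).
  induction k as [| k IH]; intros v Hv.
  - simpl (fact 1). rewrite pow_O, Rmult_1_r.
    apply (primitive_power_bound (fun v => picard_iter 1 v - picard_iter 0 v)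
             (fun s => G s y0 - 0)).
    + rewrite !picard_iter_0. ring.
    + intros s. apply (is_derive_minus (picard_iter 1) (picard_iter 0)).
      * apply (proj2 (picard_iter_spec 0)).
      * exact (is_derive_const (K := R_AbsRing) (V := R_NormedModule) y0 s).
    + intros s Hs. rewrite Rminus_0_r, pow_O, Rmult_1_r. apply (HML s ltac:(lra) y0 y0).
  - replace (M * L ^ S k * Rabs v ^ S (S k) / INR (fact (S (S k)))) with
      (M * L ^ S k / INR (fact (S k)) * Rabs v ^ S (S k) / INR (S (S k))).
    2:{ rewrite (fact_simpl (S k)), mult_INR. field.
        split; apply not_0_INR; [apply fact_neq_0 | lia]. }
    apply (primitive_power_bound (fun v => picard_iter (S (S k)) v - picard_iter (S k) v)
             (fun s => G s (picard_iter (S k) s) - G s (picard_iter k s))).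
    + rewrite !picard_iter_0. ring.
    + intros s. apply (is_derive_minus (picard_iter (S (S k))) (picard_iter (S k)));
        apply (proj2 (picard_iter_spec _)).
    + intros s Hs.
      apply Rle_trans with (1 := proj2 (HML s ltac:(lra) _ _)).
      replace (M * L ^ S k / INR (fact (S k)) * Rabs s ^ S k) with
        (L * (M * L ^ k * Rabs s ^ S k / INR (fact (S k))))
        by (change (L ^ S k) with (L * L ^ k); field; apply Rgt_not_eq, Hfact).
      apply Rmult_le_compat_l; [exact HL | apply IH; lra].
Qed.

Lemma picard_iter_uniform_cauchy N : 0 <= N -> forall eps, 0 < eps ->
  exists K, forall n m v, (K <= n <= m)%nat -> Rabs v <= N ->
    Rabs (picard_iter m v - picard_iter n v) <= eps.
Proof.
  intros HN eps Heps.
  destruct (HGstrip N HN) as [M [L [HM [HL HML]]]].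
  set (a := fun k => M * L ^ k * N ^ (S k) / INR (fact (S k))).
  assert (Hstep : forall k v, Rabs v <= N -> Rabs (picard_iter (S k) v - picard_iter k v) <= a k).
  { intros k v Hv. apply Rle_trans with (1 := picard_iter_step_bound N M L HL HML k v Hv).
    unfold a, Rdiv. apply Rmult_le_compat_r.
    - left. apply Rinv_0_lt_compat, lt_0_INR, lt_O_fact.
    - apply Rmult_le_compat_l; [apply Rmult_le_pos; [lra | now apply pow_le] |].
      apply pow_incr. split; [apply Rabs_pos | exact Hv]. }
  assert (Htele : forall n j v, Rabs v <= N ->
            Rabs (picard_iter (S (n + j)) v - picard_iter n v) <= sum_n_m a n (n + j)).
  { intros n j v Hv. induction j as [| j IH].
    - rewrite Nat.add_0_r, sum_n_n. now apply Hstep.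
    - rewrite Nat.add_succ_r, sum_n_Sm by lia.
      replace (picard_iter (S (S (n + j))) v - picard_iter n v) with
        ((picard_iter (S (S (n + j))) v - picard_iter (S (n + j)) v)
         + (picard_iter (S (n + j)) v - picard_iter n v)) by ring.
      apply Rle_trans with (1 := Rabs_triang _ _).
      specialize (Hstep (S (n + j)) v Hv). change plus with Rplus. lra. }
  destruct (Cauchy_ex_series a (ex_series_exp_majorant M L N HM HL HN) (mkposreal eps Heps))
    as [K HK].
  exists K. intros n m v [Hn Hnm] Hv.
  destruct (Nat.eq_dec n m) as [<- | Hne].
  - rewrite Rminus_diag, Rabs_R0. lra.
  - replace m with (S (n + (m - n - 1))) by lia.
    apply Rle_trans with (1 := Htele n (m - n - 1)%nat v Hv).
    apply Rle_trans with (Rabs (sum_n_m a n (n + (m - n - 1)))); [apply Rle_abs |].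
    left. apply (HK n); lia.
Qed.

Definition picard_limit (v : R) : R := Lim_seq (fun k => picard_iter k v).

Lemma picard_limit_is_lim v : is_lim_seq (fun k => picard_iter k v) (picard_limit v).
Proof.
  apply Lim_seq_correct', ex_lim_seq_cauchy_corr.
  intros e. destruct (picard_iter_uniform_cauchy (Rabs v) (Rabs_pos v) (e / 2))
    as [K HK]; [apply Rdiv_lt_0_compat; [apply cond_pos | lra] |].
  exists K. intros p q Hp Hq. generalize (cond_pos e). intros He.
  destruct (Nat.le_ge_cases p q).
  - specialize (HK p q v ltac:(lia) (Rle_refl _)). rewrite Rabs_minus_sym. lra.
  - specialize (HK q p v ltac:(lia) (Rle_refl _)). lra.
Qed.

Lemma picard_limit_uniform N : 0 <= N -> forall eps, 0 < eps ->
  exists K, forall n v, (K <= n)%nat -> Rabs v <= N ->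
    Rabs (picard_limit v - picard_iter n v) <= eps.
Proof.
  intros HN eps Heps.
  destruct (picard_iter_uniform_cauchy N HN eps Heps) as [K HK].
  exists K. intros n v Hn Hv.
  apply (is_lim_seq_le_loc (fun k => Rabs (picard_iter k v - picard_iter n v)) (fun _ => eps)
           (Rabs (picard_limit v - picard_iter n v)) eps).
  - exists n. intros k Hk. apply HK; auto.
  - apply (is_lim_seq_abs _ (picard_limit v - picard_iter n v)).
    apply is_lim_seq_minus'; [apply picard_limit_is_lim | apply is_lim_seq_const].
  - apply is_lim_seq_const.
Qed.

Lemma picard_limit_0 : picard_limit 0 = y0.
Proof.
  unfold picard_limit. rewrite (Lim_seq_ext _ (fun _ => y0)) by apply picard_iter_0.
  now rewrite Lim_seq_const.
Qed.

Lemma picard_limit_continuous s : continuous picard_limit s.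
Proof.
  apply continuity_pt_filterlim.
  assert (Hr : 0 < Rabs s + 1) by (generalize (Rabs_pos s); lra).
  apply (CVU_continuity picard_iter picard_limit 0 (mkposreal _ Hr)).
  - intros eps Heps.
    destruct (picard_limit_uniform (Rabs s + 1) ltac:(lra) (eps / 2) ltac:(lra)) as [K HK].
    exists K. intros n y Hn Hy. rewrite Boule_0_iff in Hy. simpl in Hy.
    specialize (HK n y Hn ltac:(lra)). lra.
  - intros n y _. apply continuity_pt_filterlim, (proj1 (picard_iter_spec n)).
  - apply Boule_0_iff. simpl. lra.
Qed.

Lemma picard_global_solution :
  exists phi : R -> R, phi 0 = y0 /\ forall v, is_derive phi v (G v (phi v)).
Proof.
  exists picard_limit. split; [exact picard_limit_0 |].
  intros v. apply is_derive_Reals.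
  assert (Hr : 0 < Rabs v + 1) by (generalize (Rabs_pos v); lra).
  destruct (HGstrip (Rabs v + 1) ltac:(lra)) as [M [L [_ [HL HML]]]].
  apply (derivable_pt_lim_CVU (fun n => picard_iter (S n)) (fun n y => G y (picard_iter n y))
           picard_limit (fun y => G y (picard_limit y)) v 0 (mkposreal _ Hr)).
  - apply Boule_0_iff. simpl. lra.
  - intros y n _. apply is_derive_Reals, (proj2 (picard_iter_spec n)).
  - intros y _. apply is_lim_seq_Reals.
    apply (is_lim_seq_incr_1 (fun k => picard_iter k y)), picard_limit_is_lim.
  - intros eps Heps.
    destruct (picard_limit_uniform (Rabs v + 1) ltac:(lra) (eps / (2 * (L + 1))))
      as [K HK]; [apply Rdiv_lt_0_compat; lra |].
    exists K. intros n y Hn Hy. rewrite Boule_0_iff in Hy. simpl in Hy.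
    specialize (HK n y Hn ltac:(lra)).
    apply Rle_lt_trans with (1 := proj2 (HML y ltac:(lra) _ _)).
    apply Rle_lt_trans with (L * (eps / (2 * (L + 1)))); [now apply Rmult_le_compat_l |].
    apply Rmult_lt_reg_r with (2 * (L + 1)); [lra |].
    replace (L * (eps / (2 * (L + 1))) * (2 * (L + 1))) with (L * eps) by (field; lra).
    nra.
  - intros y _. apply continuity_pt_filterlim, HGcont, picard_limit_continuous.
Qed.

End Picard.

(** * The clamped geodesic equation *)

Lemma continuous_Rmax (f g : R -> R) s : continuous f s -> continuous g s ->
  continuous (fun s => Rmax (f s) (g s)) s.
Proof.
  intros Hf Hg. apply continuity_pt_filterlim. apply continuity_pt_filterlim in Hf, Hg.
  apply continuity_pt_ext with (fun s => (f s + g s + Rabs (f s - g s)) * / 2).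
  { intros x. unfold Rmax. destruct (Rle_dec (f x) (g x)).
    - rewrite Rabs_left1 by lra. field.
    - rewrite Rabs_right by lra. field. }
  apply continuity_pt_mult; [| apply continuity_pt_const; now intros a b].
  apply continuity_pt_plus; [now apply continuity_pt_plus |].
  apply (continuity_pt_comp (fun s => f s - g s) Rabs);
    [now apply continuity_pt_minus | apply Rcontinuity_abs].
Qed.

Lemma continuous_Rmin (f g : R -> R) s : continuous f s -> continuous g s ->
  continuous (fun s => Rmin (f s) (g s)) s.
Proof.
  intros Hf Hg. apply continuity_pt_filterlim. apply continuity_pt_filterlim in Hf, Hg.
  apply continuity_pt_ext with (fun s => (f s + g s - Rabs (f s - g s)) * / 2).
  { intros x. unfold Rmin. destruct (Rle_dec (f x) (g x)).
    - rewrite Rabs_left1 by lra. field.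
    - rewrite Rabs_right by lra. field. }
  apply continuity_pt_mult; [| apply continuity_pt_const; now intros a b].
  apply continuity_pt_minus; [now apply continuity_pt_plus |].
  apply (continuity_pt_comp (fun s => f s - g s) Rabs);
    [now apply continuity_pt_minus | apply Rcontinuity_abs].
Qed.

Definition clamp (lo hi x : R) : R := Rmax lo (Rmin hi x).

Lemma clamp_in lo hi x : lo <= hi -> lo <= clamp lo hi x <= hi.
Proof. intros H. unfold clamp, Rmax, Rmin. repeat destruct Rle_dec; lra. Qed.

Lemma clamp_id lo hi x : lo <= x <= hi -> clamp lo hi x = x.
Proof. intros H. unfold clamp, Rmax, Rmin. repeat destruct Rle_dec; lra. Qed.

Lemma clamp_hi lo hi x : lo <= hi -> hi <= x -> clamp lo hi x = hi.
Proof. intros H1 H2. unfold clamp, Rmax, Rmin. repeat destruct Rle_dec; lra. Qed.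

Lemma clamp_lo lo hi x : lo <= hi -> x <= lo -> clamp lo hi x = lo.
Proof. intros H1 H2. unfold clamp, Rmax, Rmin. repeat destruct Rle_dec; lra. Qed.

Lemma clamp_lipschitz lo hi x y : lo <= hi ->
  Rabs (clamp lo hi x - clamp lo hi y) <= Rabs (x - y).
Proof.
  intros H. pose proof (Rle_abs (x - y)). pose proof (Rle_abs (- (x - y))).
  rewrite Rabs_Ropp in *. unfold clamp, Rmax, Rmin.
  repeat destruct Rle_dec; apply Rabs_le; lra.
Qed.

Lemma quadratic_field_bound (hp p xp xm K B0 : R) :
  xm <= p <= xp -> xp - xm <= K -> Rabs hp <= B0 ->
  Rabs (1/2 * hp * (p - xp) * (p - xm)) <= 1/2 * B0 * K * K.
Proof.
  intros Hp HK HB.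
  rewrite !Rabs_mult, (Rabs_right (1/2)) by lra.
  assert (Rabs (p - xp) <= K) by (apply Rabs_le; lra).
  assert (Rabs (p - xm) <= K) by (apply Rabs_le; lra).
  pose proof (Rabs_pos hp). pose proof (Rabs_pos (p - xp)). pose proof (Rabs_pos (p - xm)).
  apply Rmult_le_compat; try nra.
Qed.

Lemma quadratic_field_lipschitz (hp hq p q xp xm K B0 B1 : R) :
  xm <= p <= xp -> xm <= q <= xp -> xp - xm <= K -> Rabs hp <= B0 ->
  Rabs (hp - hq) <= B1 * Rabs (p - q) ->
  Rabs (1/2 * hp * (p - xp) * (p - xm) - 1/2 * hq * (q - xp) * (q - xm))
    <= 1/2 * (B0 * 2 * K + B1 * K * K) * Rabs (p - q).
Proof.
  intros Hp Hq HK HB0 HB1.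
  replace (1/2 * hp * (p - xp) * (p - xm) - 1/2 * hq * (q - xp) * (q - xm)) with
    (1/2 * (hp * (p - q) * ((p - xp) + (q - xm)) + (hp - hq) * ((q - xp) * (q - xm)))) by ring.
  rewrite Rabs_mult, (Rabs_right (1/2)) by lra.
  rewrite (Rmult_assoc (1/2) (_ + _)). apply Rmult_le_compat_l; [lra |].
  apply Rle_trans with (1 := Rabs_triang _ _). rewrite !Rabs_mult.
  assert (A1 : Rabs ((p - xp) + (q - xm)) <= 2 * K) by (apply Rabs_le; lra).
  assert (A2 : Rabs (q - xp) <= K) by (apply Rabs_le; lra).
  assert (A3 : Rabs (q - xm) <= K) by (apply Rabs_le; lra).
  pose proof (Rabs_pos hp). pose proof (Rabs_pos (p - q)).
  pose proof (Rabs_pos ((p - xp) + (q - xm))). pose proof (Rabs_pos (q - xp)).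
  pose proof (Rabs_pos (q - xm)). pose proof (Rabs_pos (hp - hq)).
  assert (Rabs hp * Rabs (p - q) * Rabs (p - xp + (q - xm)) <= B0 * Rabs (p - q) * (2 * K))
    by (apply Rmult_le_compat; nra).
  assert (Rabs (hp - hq) * (Rabs (q - xp) * Rabs (q - xm)) <= B1 * Rabs (p - q) * (K * K))
    by (apply Rmult_le_compat; nra).
  nra.
Qed.

Lemma quadratic_field_gap_bound (a b xp xm hb ha hc ep em eta L : R) :
  0 <= a -> a < b -> b <= xp -> xm <= 0 -> 0 < hc -> 0 < hb -> 0 < eta ->
  eta <= ep / 2 -> eta <= em -> 0 <= L -> L * (xp - xm) <= hc * ep / 2 ->
  Rabs (hb - hc) <= eta * hc -> Rabs (hb - ha) <= L * (b - a) ->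
  0 <= (1/2 * hb * (b - xp) * (b - xm) - 1/2 * ha * (a - xp) * (a - xm)) +
       hc / 2 * ((1 + ep) * xp + (1 - em) * xm) * (b - a).
Proof.
  intros Ha Hab Hb Hxm Hhc Hhb Heta Hep Hem HL Hsmall Hh HLip.
  apply Rabs_le_between in Hh. apply Rabs_le_between in HLip.
  replace ((1/2 * hb * (b - xp) * (b - xm) - 1/2 * ha * (a - xp) * (a - xm)) +
           hc / 2 * ((1 + ep) * xp + (1 - em) * xm) * (b - a)) with
    (1/2 * (hb * (b - a) * (a + b - xp - xm) - (hb - ha) * ((xp - a) * (a - xm)) +
            hc * ((1 + ep) * xp + (1 - em) * xm) * (b - a))) by field.
  set (d := b - a) in *. assert (Hd : 0 < d) by (unfold d; lra).
  assert (T1 : hb * d * (- xp) + hb * d * (- xm) <= hb * d * (a + b - xp - xm)).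
  { assert (0 <= hb * d * (a + b)) by (apply Rmult_le_pos; nra). nra. }
  assert (T1p : - (hc * (1 + eta)) * xp * d <= hb * d * (- xp))
    by (assert (0 <= d * xp) by nra; nra).
  assert (T1m : hc * (1 - eta) * (- xm) * d <= hb * d * (- xm))
    by (assert (0 <= d * (- xm)) by nra; nra).
  assert (P : 0 <= (xp - a) * (a - xm) <= xp * (xp - xm)) by (split; nra).
  assert (T2 : (hb - ha) * ((xp - a) * (a - xm)) <= L * d * (xp * (xp - xm))).
  { assert (Habs : Rabs (hb - ha) <= L * d) by (apply Rabs_le; lra).
    apply Rle_trans with (Rabs (hb - ha) * ((xp - a) * (a - xm))).
    - apply Rmult_le_compat_r; [lra | apply Rle_abs].
    - apply Rmult_le_compat; [apply Rabs_pos | lra | exact Habs | lra]. }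
  assert (T3 : L * d * (xp * (xp - xm)) <= d * xp * (hc * ep / 2)).
  { replace (L * d * (xp * (xp - xm))) with (d * xp * (L * (xp - xm))) by ring.
    apply Rmult_le_compat_l; [nra | lra]. }
  assert (T4 : 0 <= d * xp * hc * (ep / 2 - eta) + d * (- xm) * hc * (em - eta)).
  { apply Rplus_le_le_0_compat; repeat apply Rmult_le_pos; nra. }
  nra.
Qed.

(* Outside the band between the horizons the field is frozen at its boundary value 0: this
   makes it Lipschitz in [x] on every strip of [v] (so Picard iteration gives global
   solutions) without changing it on the band. *)
Definition clamped_field (h : R -> R -> R) (xp xm : R -> R) (v x : R) : R :=
  let y := clamp (xm v) (xp v) x in 1/2 * h v y * (y - xp v) * (y - xm v).

Section OutgoingGeodesics.

Variables (rc : R) (h : R -> R -> R) (xp xm dxp dxm : R -> R).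
Hypothesis Hxm_dom : forall v, - rc < xm v.
Hypothesis Horder : forall v, xm v < xp v.
Hypothesis Hh_pos : forall v x, - rc < x -> 0 < h v x.
Hypothesis Hh_der : forall v x, - rc < x -> ex_derive (h v) x.
Hypothesis Hh_cont : forall v x, - rc < x ->
  continuous (fun p : R * R => h (fst p) (snd p)) (v, x).
Hypothesis Hdh_cont : forall v x, - rc < x ->
  continuous (fun p : R * R => Derive (h (fst p)) (snd p)) (v, x).
Hypothesis Hdxp : forall v, is_derive xp v (dxp v).
Hypothesis Hdxp_neg : forall v, dxp v < 0.
Hypothesis Hdxm : forall v, is_derive xm v (dxm v).
Hypothesis Hdxm_pos : forall v, 0 < dxm v.

Let G := clamped_field h xp xm.

Definition solves_clamped (g : R -> R) : Prop := forall v, is_derive g v (G v (g v)).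

Lemma xp_nonincreasing a b : a <= b -> xp b <= xp a.
Proof.
  intros Hab. apply (derive_nonpos_nonincreasing xp dxp a b Hab).
  - intros t _. apply Hdxp.
  - intros t _. left. apply Hdxp_neg.
Qed.

Lemma xm_nondecreasing a b : a <= b -> xm a <= xm b.
Proof.
  intros Hab. apply (derive_nonneg_nondecreasing xm dxm a b Hab).
  - intros t _. apply Hdxm.
  - intros t _. left. apply Hdxm_pos.
Qed.

Lemma band_shrinks a v : a <= v -> forall x, xm v <= x <= xp v -> xm a <= x <= xp a.
Proof.
  intros Hav x Hx. pose proof (xm_nondecreasing a v Hav). pose proof (xp_nonincreasing a v Hav).
  lra.
Qed.

Lemma clamped_field_band v x : xm v <= x <= xp v ->
  G v x = 1/2 * h v x * (x - xp v) * (x - xm v).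
Proof. intros Hx. unfold G, clamped_field. now rewrite clamp_id. Qed.

Lemma clamped_field_above v x : xp v <= x -> G v x = 0.
Proof.
  intros Hx. unfold G, clamped_field. rewrite clamp_hi by (pose proof (Horder v); lra). ring.
Qed.

Lemma clamped_field_below v x : x <= xm v -> G v x = 0.
Proof.
  intros Hx. unfold G, clamped_field. rewrite clamp_lo by (pose proof (Horder v); lra). ring.
Qed.

Lemma h_box_bounds a b : a <= b -> exists B0 B1, 0 <= B0 /\ 0 <= B1 /\
  forall v x, a <= v <= b -> xm a <= x <= xp a ->
    Rabs (h v x) <= B0 /\ Rabs (Derive (h v) x) <= B1.
Proof.
  intros Hab.
  assert (Hband : xm a <= xp a) by (left; apply Horder).
  assert (Hdom : forall x, xm a <= x <= xp a -> - rc < x)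
    by (intros x Hx; pose proof (Hxm_dom a); lra).
  destruct (continuous2_bounded_box h a b (xm a) (xp a) Hab Hband) as [B0 HB0];
    [intros v x _ Hx; now apply Hh_cont, Hdom |].
  destruct (continuous2_bounded_box (fun v x => Derive (h v) x) a b (xm a) (xp a) Hab Hband)
    as [B1 HB1]; [intros v x _ Hx; now apply Hdh_cont, Hdom |].
  exists B0, B1. repeat split.
  - apply Rle_trans with (2 := HB0 a (xm a) ltac:(lra) ltac:(lra)). apply Rabs_pos.
  - apply Rle_trans with (2 := HB1 a (xm a) ltac:(lra) ltac:(lra)). apply Rabs_pos.
  - now apply HB0.
  - now apply HB1.
Qed.

Lemma clamped_field_strip a b : a <= b -> exists M L, 0 <= M /\ 0 <= L /\
  forall v, a <= v <= b -> forall x y,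
    Rabs (G v x) <= M /\ Rabs (G v x - G v y) <= L * Rabs (x - y).
Proof.
  intros Hab. destruct (h_box_bounds a b Hab) as [B0 [B1 [HB0 [HB1 HB]]]].
  set (K := xp a - xm a).
  assert (HK : 0 <= K) by (unfold K; pose proof (Horder a); lra).
  exists (1/2 * B0 * K * K), (1/2 * (B0 * 2 * K + B1 * K * K)).
  split; [apply Rmult_le_pos; [apply Rmult_le_pos |]; nra |].
  split; [nra |].
  intros v Hv x y.
  assert (Hband : xm v <= xp v) by (left; apply Horder).
  assert (HKv : xp v - xm v <= K)
    by (unfold K; pose proof (xm_nondecreasing a v (proj1 Hv));
        pose proof (xp_nonincreasing a v (proj1 Hv)); lra).
  pose proof (clamp_in (xm v) (xp v) x Hband) as Hp.
  pose proof (clamp_in (xm v) (xp v) y Hband) as Hq.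
  unfold G, clamped_field. split.
  - apply (quadratic_field_bound _ _ _ _ K B0 Hp HKv).
    apply (HB v); [exact Hv | now apply (band_shrinks a v)].
  - eapply Rle_trans.
    + apply (quadratic_field_lipschitz _ _ _ _ _ _ K B0 B1 Hp Hq HKv).
      * apply (HB v); [exact Hv | now apply (band_shrinks a v)].
      * apply (lipschitz_of_derive_bound (h v) (xm a) (xp a)).
        -- intros z Hz. apply Hh_der. pose proof (Hxm_dom a). lra.
        -- intros z Hz. now apply (HB v z Hv).
        -- now apply (band_shrinks a v).
        -- now apply (band_shrinks a v).
    + apply Rmult_le_compat_l; [nra | now apply clamp_lipschitz].
Qed.

Lemma clamped_field_continuous (phi : R -> R) : (forall s, continuous phi s) ->
  forall s, continuous (fun s => G s (phi s)) s.
Proof.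
  intros Hphi s.
  assert (Hxpc : forall t, continuous xp t)
    by (intros t; exact (is_derive_continuous _ _ _ (Hdxp t))).
  assert (Hxmc : forall t, continuous xm t)
    by (intros t; exact (is_derive_continuous _ _ _ (Hdxm t))).
  set (c := fun s => clamp (xm s) (xp s) (phi s)).
  assert (Hc : continuous c s) by (apply continuous_Rmax; [| apply continuous_Rmin]; auto).
  assert (Hhc : continuous (fun s => h s (c s)) s).
  { apply (continuous_comp_2 (fun s => s) c h); [apply continuous_id | exact Hc |].
    apply Hh_cont. pose proof (clamp_in (xm s) (xp s) (phi s) (Rlt_le _ _ (Horder s))).
    pose proof (Hxm_dom s). unfold c. lra. }
  apply continuity_pt_filterlim. unfold G, clamped_field. fold (c s).
  apply continuity_pt_filterlim in Hc, Hhc.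
  pose proof (proj2 (continuity_pt_filterlim xp s) (Hxpc s)).
  pose proof (proj2 (continuity_pt_filterlim xm s) (Hxmc s)).
  apply continuity_pt_mult; [apply continuity_pt_mult; [apply continuity_pt_mult |] |].
  - apply continuity_pt_const. now intros p q.
  - exact Hhc.
  - now apply continuity_pt_minus.
  - now apply continuity_pt_minus.
Qed.

Lemma clamped_flow_exists y : exists phi, phi 0 = y /\ solves_clamped phi.
Proof.
  apply picard_global_solution; [exact clamped_field_continuous |].
  intros N HN. destruct (clamped_field_strip (- N) N ltac:(lra)) as [M [L [HM [HL HML]]]].
  exists M, L. split; [exact HM | split; [exact HL |]].
  intros v Hv. apply HML. now apply Rabs_le_between.
Qed.

Definition clamped_flow (y : R) : R -> R :=
  proj1_sig (constructive_indefinite_description _ (clamped_flow_exists y)).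

Lemma clamped_flow_spec y : clamped_flow y 0 = y /\ solves_clamped (clamped_flow y).
Proof. apply (proj2_sig (constructive_indefinite_description _ (clamped_flow_exists y))). Qed.

Lemma clamped_solution_exits_above g a b : solves_clamped g -> a < b ->
  xp a <= g a -> xp b < g b.
Proof.
  intros Hg Hab Ha. enough (0 < g b - xp b) by lra.
  refine (barrier_pos (fun t => g t - xp t) (fun t => G t (g t) - dxp t) _ _ a b Hab _);
    [| | lra].
  - intros t. apply (is_derive_minus g xp); [apply Hg | apply Hdxp].
  - intros t Ht. rewrite clamped_field_above by lra. pose proof (Hdxp_neg t). lra.
Qed.

Lemma clamped_solution_exits_below g a b : solves_clamped g -> a < b ->
  g a <= xm a -> g b < xm b.
Proof.
  intros Hg Hab Ha. enough (0 < xm b - g b) by lra.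
  refine (barrier_pos (fun t => xm t - g t) (fun t => dxm t - G t (g t)) _ _ a b Hab _);
    [| | lra].
  - intros t. apply (is_derive_minus xm g); [apply Hdxm | apply Hg].
  - intros t Ht. rewrite clamped_field_below by lra. pose proof (Hdxm_pos t). lra.
Qed.

Lemma clamped_solutions_gronwall a b : a <= b -> exists L, 0 <= L /\
  forall g1 g2, solves_clamped g1 -> solves_clamped g2 ->
    (g1 b - g2 b)^2 <= (g1 a - g2 a)^2 * exp (2 * L * (b - a)) /\
    (g1 a - g2 a)^2 <= (g1 b - g2 b)^2 * exp (2 * L * (b - a)).
Proof.
  intros Hab. destruct (clamped_field_strip a b Hab) as [M [L [_ [HL HML]]]].
  exists L. split; [exact HL |]. intros g1 g2 H1 H2.
  apply (gronwall_sq (fun t => g1 t - g2 t) (fun t => G t (g1 t) - G t (g2 t)) L a b HL Hab).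
  - intros t _. now apply (is_derive_minus g1 g2).
  - intros t Ht. apply (HML t Ht).
Qed.

Lemma clamped_flow_continuous y v : 0 <= v -> forall gap, 0 < gap ->
  exists dl, 0 < dl /\ forall y', Rabs (y' - y) < dl ->
    Rabs (clamped_flow y' v - clamped_flow y v) < gap.
Proof.
  intros Hv gap Hgap. destruct (clamped_solutions_gronwall 0 v Hv) as [L [HL HG]].
  set (E := exp (L * v)). assert (HE : 0 < E) by apply exp_pos.
  exists (gap / E). split; [now apply Rdiv_lt_0_compat |].
  intros y' Hy'.
  destruct (clamped_flow_spec y) as [H0 Hsol]. destruct (clamped_flow_spec y') as [H0' Hsol'].
  destruct (HG _ _ Hsol' Hsol) as [Hsq _]. rewrite H0, H0' in Hsq.
  replace (exp (2 * L * (v - 0))) with (E * E) in Hsq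
    by (unfold E; rewrite <- exp_plus; f_equal; ring).
  assert (Hlt : Rabs (y' - y) * E < gap).
  { apply (Rmult_lt_compat_r E) in Hy'; [| exact HE].
    unfold Rdiv in Hy'. now rewrite Rmult_assoc, Rinv_l, Rmult_1_r in Hy' by lra. }
  assert (Hsq' : (clamped_flow y' v - clamped_flow y v)^2 < gap^2).
  { apply Rle_lt_trans with (1 := Hsq).
    replace ((y' - y)^2 * (E * E)) with ((Rabs (y' - y) * E)^2)
      by (rewrite Rpow_mult_distr, pow2_abs; ring).
    assert (0 <= Rabs (y' - y) * E) by (pose proof (Rabs_pos (y' - y)); nra).
    nra. }
  apply Rabs_lt_between'. split; nra.
Qed.

Definition exits_below (y : R) : Prop := exists v, 0 <= v /\ clamped_flow y v < xm v.
Definition exits_above (y : R) : Prop := exists v, 0 <= v /\ xp v < clamped_flow y v.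

Lemma exits_below_open y : exits_below y ->
  exists r, 0 < r /\ forall y', Rabs (y' - y) < r -> exits_below y'.
Proof.
  intros [v [Hv Hexit]].
  destruct (clamped_flow_continuous y v Hv (xm v - clamped_flow y v)) as [r [Hr Hnear]]; [lra |].
  exists r. split; [exact Hr |]. intros y' Hy'. exists v. split; [exact Hv |].
  specialize (Hnear y' Hy'). apply Rabs_def2 in Hnear. lra.
Qed.

Lemma exits_above_open y : exits_above y ->
  exists r, 0 < r /\ forall y', Rabs (y' - y) < r -> exits_above y'.
Proof.
  intros [v [Hv Hexit]].
  destruct (clamped_flow_continuous y v Hv (clamped_flow y v - xp v)) as [r [Hr Hnear]]; [lra |].
  exists r. split; [exact Hr |]. intros y' Hy'. exists v. split; [exact Hv |].
  specialize (Hnear y' Hy'). apply Rabs_def2 in Hnear. lra.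
Qed.

Lemma exits_below_and_above y : exits_below y -> exits_above y -> False.
Proof.
  intros [v1 [_ H1]] [v2 [_ H2]]. pose proof (proj2 (clamped_flow_spec y)) as Hsol.
  destruct (Rtotal_order v1 v2) as [Hlt | [<- | Hgt]].
  - pose proof (clamped_solution_exits_below _ v1 v2 Hsol Hlt ltac:(lra)).
    pose proof (Horder v2). lra.
  - pose proof (Horder v1). lra.
  - pose proof (clamped_solution_exits_above _ v2 v1 Hsol Hgt ltac:(lra)).
    pose proof (Horder v1). lra.
Qed.

Lemma exits_below_xm0 : exits_below (xm 0).
Proof.
  destruct (clamped_flow_spec (xm 0)) as [H0 Hsol].
  exists 1. split; [lra |]. apply (clamped_solution_exits_below _ 0 1 Hsol); lra.
Qed.

Lemma exits_above_xp0 : exits_above (xp 0).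
Proof.
  destruct (clamped_flow_spec (xp 0)) as [H0 Hsol].
  exists 1. split; [lra |]. apply (clamped_solution_exits_above _ 0 1 Hsol); lra.
Qed.

(* Barriers only act forward in time, so a flow that leaves the band at some [v] is
   still outside at every later time, in particular at some [v >= 0]. *)
Lemma trapped_flow_between y : ~ exits_below y -> ~ exits_above y ->
  between_AHs xp xm (clamped_flow y).
Proof.
  intros Hb Ha v. pose proof (proj2 (clamped_flow_spec y)) as Hsol.
  set (w := Rmax v 0 + 1).
  assert (v < w /\ 0 <= w) by (unfold w; generalize (Rmax_l v 0) (Rmax_r v 0); lra).
  split; apply Rnot_le_lt; intros Hout.
  - apply Hb. exists w. split; [lra |]. apply (clamped_solution_exits_below _ v w Hsol); lra.
  - apply Ha. exists w. split; [lra |]. apply (clamped_solution_exits_above _ v w Hsol); lra.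
Qed.

Lemma geodesic_between_solves_clamped g : between_AHs xp xm g ->
  outgoing_null_geodesic h xp xm g <-> solves_clamped g.
Proof.
  intros Hg. split; intros Hode v; specialize (Hode v);
    rewrite clamped_field_band in * by (pose proof (Hg v); lra); exact Hode.
Qed.

Lemma horizon_geodesic_exists :
  exists g, outgoing_null_geodesic h xp xm g /\ between_AHs xp xm g.
Proof.
  destruct (interval_not_split exits_below exits_above (xm 0) (xp 0)
              (Rlt_le _ _ (Horder 0)) exits_below_xm0 exits_above_xp0
              exits_below_and_above exits_below_open exits_above_open)
    as [y [_ [Hb Ha]]].
  pose proof (trapped_flow_between y Hb Ha) as Hbetween.
  exists (clamped_flow y). split; [| exact Hbetween].
  apply geodesic_between_solves_clamped, clamped_flow_spec; exact Hbetween.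
Qed.

Hypothesis Hxp_lim : is_lim xp p_infty 0.
Hypothesis Hxm_lim : is_lim xm p_infty 0.

Lemma xm_nonpos v : xm v <= 0.
Proof.
  enough (- 0 <= - xm v) by lra.
  apply (nonincreasing_ge_lim (fun v => - xm v) (fun v => - xm v)).
  - intros a b Hab. pose proof (xm_nondecreasing a b Hab). lra.
  - intros w. apply Rle_refl.
  - exact (is_lim_opp xm p_infty 0 Hxm_lim).
Qed.

Lemma geodesic_between_nonincreasing g :
  outgoing_null_geodesic h xp xm g -> between_AHs xp xm g ->
  forall a b, a <= b -> g b <= g a.
Proof.
  intros Hode Hg a b Hab.
  apply (derive_nonpos_nonincreasing g
           (fun t => 1/2 * h t (g t) * (g t - xp t) * (g t - xm t)) a b Hab);
    [intros t _; apply Hode |].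
  intros t _. specialize (Hg t).
  assert (0 < h t (g t)) by (apply Hh_pos; pose proof (Hxm_dom t); lra).
  assert (0 < h t (g t) * (g t - xm t)) by (apply Rmult_lt_0_compat; lra).
  nra.
Qed.

Lemma geodesic_between_nonneg g :
  outgoing_null_geodesic h xp xm g -> between_AHs xp xm g -> forall v, 0 <= g v.
Proof.
  intros Hode Hg. apply (nonincreasing_ge_lim g xm 0); [| | exact Hxm_lim].
  - now apply geodesic_between_nonincreasing.
  - intros w. left. apply Hg.
Qed.

Lemma clamped_solutions_stay_ordered g1 g2 v0 : solves_clamped g1 -> solves_clamped g2 ->
  g1 v0 < g2 v0 -> forall v, v0 <= v -> g1 v < g2 v.
Proof.
  intros H1 H2 H0 v Hv. apply Rnot_le_lt. intros Hle.
  assert (Hcont : forall t, continuous (fun t => g2 t - g1 t) t)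
    by (intros t; apply (is_derive_continuous _ t (G t (g2 t) - G t (g1 t)));
        now apply (is_derive_minus g2 g1)).
  destruct (IVT_gen_consistent (fun t => g2 t - g1 t) v0 v 0 Hcont) as [t [Ht Hmeet]].
  { rewrite Rmin_right, Rmax_left by lra. lra. }
  rewrite Rmin_left, Rmax_right in Ht by lra.
  destruct (clamped_solutions_gronwall v0 t (proj1 Ht)) as [L [_ HG]].
  destruct (HG g2 g1 H2 H1) as [_ Hback]. simpl in Hmeet. rewrite Hmeet in Hback.
  assert (0 < (g2 v0 - g1 v0)^2) by (apply pow_lt; lra).
  rewrite pow_ne_zero in Hback by lia. lra.
Qed.

(** * Uniqueness of the horizon geodesic *)

Variables (hinf : R -> R) (hc eps_p eps_m delta : R) (Xp Xm : R -> R).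
Hypothesis Hdelta : 0 < delta.
Hypothesis Hh_near : forall eps, 0 < eps -> exists V, forall v x, V <= v -> Rabs x <= delta ->
  Rabs (h v x - hinf x) < eps.
Hypothesis Hdh_near : forall eps, 0 < eps -> exists V, forall v x, V <= v -> Rabs x <= delta ->
  Rabs (Derive (h v) x - Derive hinf x) < eps.
Hypothesis Hhinf_cont : continuous hinf 0.
Hypothesis Hdhinf_cont : forall x, 0 <= x <= delta -> continuous (Derive hinf) x.
Hypothesis Hhc : hc = hinf 0.
Hypothesis Hhc_pos : 0 < hc.
Hypothesis HXp : forall v, is_derive Xp v (xp v).
Hypothesis HXm : forall v, is_derive Xm v (xm v).
Hypothesis Heps_p : 0 < eps_p.
Hypothesis Heps_m : 0 < eps_m.
Hypothesis Hlim : is_lim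
  (fun v => xp v * exp (hc / 2 * ((1 + eps_p) * Xp v + (1 - eps_m) * Xm v))) p_infty 0.

Let weight (v : R) : R := hc / 2 * ((1 + eps_p) * Xp v + (1 - eps_m) * Xm v).
Let weight_rate (v : R) : R := hc / 2 * ((1 + eps_p) * xp v + (1 - eps_m) * xm v).

Lemma rc_pos : 0 < rc.
Proof. pose proof (Hxm_dom 0). pose proof (xm_nonpos 0). lra. Qed.

Lemma h_eventually_near_hc eta : 0 < eta -> exists d V, 0 < d /\ d <= delta /\
  forall v x, V <= v -> 0 <= x <= d -> Rabs (h v x - hc) <= eta * hc.
Proof.
  intros Heta.
  destruct (continuous_eps hinf 0 (eta * hc / 2) Hhinf_cont) as [r [Hr Hr_near]]; [nra |].
  destruct (Hh_near (eta * hc / 2)) as [V HV]; [nra |].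
  exists (Rmin delta (r / 2)), V.
  split; [now apply Rmin_glb_lt; lra |]. split; [apply Rmin_l |].
  intros v x Hv Hx. pose proof (Rmin_l delta (r / 2)). pose proof (Rmin_r delta (r / 2)).
  specialize (HV v x Hv ltac:(rewrite Rabs_right; lra)).
  specialize (Hr_near x ltac:(rewrite Rminus_0_r, Rabs_right; lra)).
  rewrite <- Hhc in Hr_near. apply Rabs_def2 in HV. apply Rabs_def2 in Hr_near.
  apply Rabs_le. lra.
Qed.

Lemma h_eventually_lipschitz : exists L V, 0 <= L /\
  forall v x y, V <= v -> 0 <= x <= delta -> 0 <= y <= delta ->
    Rabs (h v x - h v y) <= L * Rabs (x - y).
Proof.
  destruct (continuous_bounded_interval (Derive hinf) 0 delta) as [B HB];
    [lra | exact Hdhinf_cont |].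
  destruct (Hdh_near 1 Rlt_0_1) as [V HV].
  exists (B + 1), V.
  split; [pose proof (HB 0 ltac:(lra)); pose proof (Rabs_pos (Derive hinf 0)); lra |].
  intros v x y Hv Hx Hy. apply (lipschitz_of_derive_bound (h v) 0 delta); auto.
  - intros z Hz. apply Hh_der. pose proof rc_pos. lra.
  - intros z Hz. specialize (HV v z Hv ltac:(rewrite Rabs_right; lra)). specialize (HB z Hz).
    apply Rabs_def2 in HV. apply Rabs_le_between in HB. apply Rabs_le. lra.
Qed.

(* Near [x = 0] the geodesic equation linearizes to [dx/dv = h_c/2 (x - x_+)(x - x_-)]; the
   margins [eps_p] and [eps_m] absorb the error terms once [v] is large. *)
Lemma field_gap_eventually_bounded : exists V, forall v a b,
  V <= v -> 0 <= a -> a < b -> b <= xp v ->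
  0 <= (1/2 * h v b * (b - xp v) * (b - xm v) - 1/2 * h v a * (a - xp v) * (a - xm v))
       + weight_rate v * (b - a).
Proof.
  set (eta := Rmin eps_p eps_m / 2).
  assert (Heta : 0 < eta) by (unfold eta; pose proof (Rmin_glb_lt _ _ _ Heps_p Heps_m); lra).
  assert (Heta_p : eta <= eps_p / 2) by (unfold eta; pose proof (Rmin_l eps_p eps_m); lra).
  assert (Heta_m : eta <= eps_m) by (unfold eta; pose proof (Rmin_r eps_p eps_m); lra).
  destruct (h_eventually_near_hc eta Heta) as [d [V0 [Hd [Hd_delta Hnear]]]].
  destruct h_eventually_lipschitz as [L [V1 [HL Hlip]]].
  set (sm := hc * eps_p / (2 * (L + 1))).
  assert (Hsm : 0 < sm) by (unfold sm; apply Rdiv_lt_0_compat; nra).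
  assert (HLsm : L * sm <= hc * eps_p / 2).
  { unfold sm. apply Rmult_le_reg_r with (2 * (L + 1)); [lra |].
    replace (L * (hc * eps_p / (2 * (L + 1))) * (2 * (L + 1))) with (L * (hc * eps_p))
      by (field; lra).
    nra. }
  destruct (is_lim_pinfty_eps xp 0 Hxp_lim (Rmin d (sm / 2))) as [V2 HV2];
    [apply Rmin_glb_lt; lra |].
  destruct (is_lim_pinfty_eps xm 0 Hxm_lim (sm / 2)) as [V3 HV3]; [lra |].
  exists (Rmax (Rmax V0 V1) (Rmax (V2 + 1) (V3 + 1))).
  intros v a b Hv Ha Hab Hb.
  pose proof (Rmax_l (Rmax V0 V1) (Rmax (V2 + 1) (V3 + 1))).
  pose proof (Rmax_r (Rmax V0 V1) (Rmax (V2 + 1) (V3 + 1))).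
  pose proof (Rmax_l V0 V1). pose proof (Rmax_r V0 V1).
  pose proof (Rmax_l (V2 + 1) (V3 + 1)). pose proof (Rmax_r (V2 + 1) (V3 + 1)).
  specialize (HV2 v ltac:(lra)). specialize (HV3 v ltac:(lra)).
  rewrite Rminus_0_r in HV2, HV3. apply Rabs_def2 in HV2. apply Rabs_def2 in HV3.
  pose proof (Rmin_l d (sm / 2)). pose proof (Rmin_r d (sm / 2)).
  apply (quadratic_field_gap_bound a b (xp v) (xm v) _ _ hc eps_p eps_m eta L);
    try lra; auto using xm_nonpos.
  - apply Hh_pos. pose proof rc_pos. lra.
  - apply Rle_trans with (L * sm); [apply Rmult_le_compat_l; lra | exact HLsm].
  - apply Hnear; lra.
  - rewrite <- (Rabs_right (b - a)) by lra. apply Hlip; lra.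
Qed.

Lemma weighted_gap_eventually_nondecreasing g1 g2 v0 :
  outgoing_null_geodesic h xp xm g1 -> between_AHs xp xm g1 ->
  outgoing_null_geodesic h xp xm g2 -> between_AHs xp xm g2 -> g1 v0 < g2 v0 ->
  exists V, v0 <= V /\ forall v, V <= v ->
    (g2 V - g1 V) * exp (weight V) <= (g2 v - g1 v) * exp (weight v).
Proof.
  intros O1 B1 O2 B2 H0.
  assert (S1 : solves_clamped g1) by now apply geodesic_between_solves_clamped.
  assert (S2 : solves_clamped g2) by now apply geodesic_between_solves_clamped.
  destruct field_gap_eventually_bounded as [V HV].
  exists (Rmax v0 V). split; [apply Rmax_l |]. intros v Hv.
  apply (derive_nonneg_nondecreasing (fun t => (g2 t - g1 t) * exp (weight t))
           (fun t => (G t (g2 t) - G t (g1 t) + weight_rate t * (g2 t - g1 t)) * exp (weight t)));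
    [exact Hv | |].
  - intros t _.
    apply (is_derive_mul_exp (fun s => g2 s - g1 s) weight t _ (weight_rate t));
      [now apply (is_derive_minus g2 g1) |].
    unfold weight, weight_rate.
    apply (is_derive_scal (fun t => (1 + eps_p) * Xp t + (1 - eps_m) * Xm t)).
    apply (is_derive_plus (fun t => (1 + eps_p) * Xp t) (fun t => (1 - eps_m) * Xm t));
      apply is_derive_scal; auto.
  - intros t Ht. pose proof (Rmax_l v0 V). pose proof (Rmax_r v0 V).
    assert (Hord : g1 t < g2 t)
      by (apply (clamped_solutions_stay_ordered g1 g2 v0); auto; lra).
    pose proof (B1 t). pose proof (B2 t).
    rewrite !clamped_field_band by lra.
    apply Rmult_le_pos; [| left; apply exp_pos].
    apply HV; [lra | now apply (geodesic_between_nonneg g1) | exact Hord | lra].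
Qed.

Lemma between_geodesics_ordered_absurd g1 g2 v0 :
  outgoing_null_geodesic h xp xm g1 -> between_AHs xp xm g1 ->
  outgoing_null_geodesic h xp xm g2 -> between_AHs xp xm g2 -> g1 v0 < g2 v0 -> False.
Proof.
  intros O1 B1 O2 B2 H0.
  destruct (weighted_gap_eventually_nondecreasing g1 g2 v0 O1 B1 O2 B2 H0) as [V [HV Hmono]].
  assert (Hpos : 0 < (g2 V - g1 V) * exp (weight V)).
  { apply Rmult_lt_0_compat; [| apply exp_pos].
    enough (g1 V < g2 V) by lra.
    apply (clamped_solutions_stay_ordered g1 g2 v0); auto using geodesic_between_solves_clamped;
      now apply geodesic_between_solves_clamped. }
  destruct (is_lim_pinfty_eps _ 0 Hlim _ Hpos) as [M HM].
  set (v := Rmax M V + 1).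
  specialize (HM v ltac:(unfold v; pose proof (Rmax_l M V); lra)).
  specialize (Hmono v ltac:(unfold v; pose proof (Rmax_r M V); lra)).
  rewrite Rminus_0_r in HM. apply Rabs_def2 in HM.
  assert ((g2 v - g1 v) * exp (weight v) <= xp v * exp (weight v)).
  { apply Rmult_le_compat_r; [left; apply exp_pos |].
    pose proof (geodesic_between_nonneg g1 O1 B1 v). pose proof (B2 v). lra. }
  unfold weight in *. lra.
Qed.

Lemma horizon_geodesic_type1 : type1 h xp xm.
Proof.
  destruct horizon_geodesic_exists as [g [Hode Hg]].
  exists g. split; [exact Hode | split; [exact Hg |]].
  intros g' Hode' Hg' v.
  destruct (Rtotal_order (g' v) (g v)) as [Hlt | [Heq | Hgt]]; [exfalso | exact Heq | exfalso].
  - exact (between_geodesics_ordered_absurd g' g v Hode' Hg' Hode Hg Hlt).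
  - exact (between_geodesics_ordered_absurd g g' v Hode Hg Hode' Hg' Hgt).
Qed.

End OutgoingGeodesics.

Theorem proposition3
  (rc : R) (h : R -> R -> R) (xp xm dxp dxm Xp Xm : R -> R)
  (hinf : R -> R) (hc eps_p eps_m : R)
  (* r_c > 0 and the geometric setting: 0 < r_- < r_+ *)
  (Hrc : 0 < rc)
  (Hxm_pos : forall v, - rc < xm v)
  (Horder : forall v, xm v < xp v)
  (* h = A F > 0 on the spacetime (r > 0) *)
  (Hh_pos : forall v x, - rc < x -> 0 < h v x)
  (* regularity of h: smooth in x, h and dh/dx jointly continuous *)
  (Hh_smooth : forall n v x, - rc < x -> ex_derive_n (h v) n x)
  (Hh_cont : forall v x, - rc < x ->
     continuous (fun p : R * R => h (fst p) (snd p)) (v, x))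
  (Hdh_cont : forall v x, - rc < x ->
     continuous (fun p : R * R => Derive (h (fst p)) (snd p)) (v, x))
  (* the v -> oo limit of h is a smooth function hinf of x, and all
     x-derivatives of h converge (uniformly near x = 0) to those of hinf *)
  (Hhinf_smooth : forall n x, - rc < x -> ex_derive_n hinf n x)
  (Hh_conv : exists delta, 0 < delta /\ delta < rc /\
     forall (n : nat) (eps : R), 0 < eps -> exists V : R, forall v x,
       V <= v -> Rabs x <= delta ->
       Rabs (Derive_n (h v) n x - Derive_n hinf n x) < eps)
  (Hhc : hc = hinf 0)
  (Hhc_pos : 0 < hc)
  (* dynamics of the horizons: d r_+/dv < 0, Case 2: d r_-/dv > 0 *)
  (Hdxp : forall v, is_derive xp v (dxp v))
  (Hdxp_neg : forall v, dxp v < 0)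
  (Hdxm : forall v, is_derive xm v (dxm v))
  (Hdxm_pos : forall v, 0 < dxm v)
  (* r_pm -> r_c *)
  (Hxp_lim : is_lim xp p_infty 0)
  (Hxm_lim : is_lim xm p_infty 0)
  (* X_pm primitives of x_pm *)
  (HXp : forall v, is_derive Xp v (xp v))
  (HXm : forall v, is_derive Xm v (xm v))
  (* the hypothesis of the proposition *)
  (Heps_p : 0 < eps_p) (Heps_m : 0 < eps_m)
  (Hlim : is_lim
     (fun v => xp v * exp (hc / 2 * ((1 + eps_p) * Xp v + (1 - eps_m) * Xm v)))
     p_infty 0) :
  type1 h xp xm.
Proof.
  destruct Hh_conv as [delta [Hdelta [_ Hconv]]].
  apply (horizon_geodesic_type1 rc h xp xm dxp dxm Hxm_pos Horder Hh_pos
           (fun v x Hx => Hh_smooth 1%nat v x Hx) Hh_cont Hdh_cont Hdxp Hdxp_neg Hdxm Hdxm_pos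
           Hxp_lim Hxm_lim hinf hc eps_p eps_m delta Xp Xm Hdelta (Hconv 0%nat) (Hconv 1%nat));
    auto.
  - apply (ex_derive_continuous (V := R_NormedModule)), (Hhinf_smooth 1%nat 0). lra.
  - intros x Hx. apply (ex_derive_continuous (V := R_NormedModule)), (Hhinf_smooth 2%nat x). lra.
Qed.
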